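(* Let $G$ be a locally compact group with a continuous action $\alpha$ by isometries on a Banach space $A$. For a fixed non-zero $a\in A$ and a subset $U\subseteq G$ let $F_U(a)=\operatorname{span}\{\alpha_x(a)\mid x\in U\}$. (i) If $F_U(a)$ is finite dimensional for some neighborhood $U$ of $e$, then $G$ has an open subgroup $H$ such that $F_H(a)$ is finite dimensional. (ii) The same conclusion holds if $F_C(a)$ is finite dimensional for some measurable set $C$ of positive Haar measure. (iii) If in addition the functions $x\mapsto\langle\alpha_x(b),\phi\rangle$ belong to $C_0(G)$ for all $b\in A$, $\phi\in A^*$, then the open subgroup $H$ in (i) or (ii) is moreover compact. *)

From HB Require Import structures.
From mathcomp Require Import all_boot all_order all_algebra.
From mathcomp Require Import all_classical all_reals all_analysis.
Set Implicit Arguments. Unset Strict Implicit. Unset Printing Implicit Defensive.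
Import Order.TTheory GRing.Theory Num.Theory.
Import numFieldNormedType.Exports.
Local Open Scope classical_set_scope.
Local Open Scope ring_scope.

Definition lc_group (G : ptopologicalType) (mul : G -> G -> G) (inv : G -> G)
    (e : G) : Prop :=
  [/\ (forall x y z, mul x (mul y z) = mul (mul x y) z),
      (forall x, mul e x = x /\ mul x e = x),
      (forall x, mul (inv x) x = e /\ mul x (inv x) = e),
      (continuous (fun p : G * G => mul p.1 p.2) /\ continuous inv) &
      (hausdorff_space G /\ locally_compact [set: G])].

(** [alpha] is a continuous action of the group by linear isometries on the
    normed space [A] (continuity = strong continuity: x |-> alpha_x(v) is
    continuous for every v). *)
Definition isometric_action (R : realType) (G : ptopologicalType)
    (mul : G -> G -> G) (e : G) (A : normedModType R) (alpha : G -> A -> A) :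
    Prop :=
  [/\ (forall x (c : R) (u v : A), alpha x (c *: u + v) = c *: alpha x u + alpha x v),
      (forall x (v : A), `|alpha x v| = `|v|),
      (forall v, alpha e v = v),
      (forall x y v, alpha (mul x y) v = alpha x (alpha y v)) &
      (forall v, continuous (fun x => alpha x v))].

Definition orbit_set (G : Type) (R : realType) (A : normedModType R)
    (alpha : G -> A -> A) (a : A) (U : set G) : set A :=
  [set alpha x a | x in U].

Definition fin_dim_span (R : realType) (A : normedModType R) (S : set A) : Prop :=
  exists s : seq A, forall v, S v ->
    exists c : nat -> R, v = \sum_(i < size s) c i *: nth 0 s i.

Definition subgroup (G : Type) (mul : G -> G -> G) (inv : G -> G) (e : G)
    (H : set G) : Prop :=
  [/\ H e, (forall x y, H x -> H y -> H (mul x y)) & (forall x, H x -> H (inv x))].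

Notation borelType G := (g_sigma_algebraType (@open G)).

Definition haar_measure (R : realType) (G : ptopologicalType) (mul : G -> G -> G)
    (mu : {measure set (borelType G) -> \bar R}) : Prop :=
  [/\ (forall x (E : set (borelType G)), measurable E ->
          mu [set mul x y | y in E] = mu E),
      (forall K : set G, compact K -> (mu K < +oo)%E),
      (forall U : set G, open U -> U !=set0 -> (0 < mu U)%E) &
      (forall E : set (borelType G), measurable E ->
          mu E = ereal_sup [set mu K | K in [set K : set G | compact K /\ K `<=` E]])].

(** f vanishes at infinity (f in C_0(G), continuity being given separately). *)
Definition vanishes_at_infty (R : realType) (G : ptopologicalType) (f : G -> R) : Prop :=
  forall eps : R, 0 < eps -> exists K : set G, compact K /\
    forall x, ~ K x -> `|f x| < eps.

Definition dual_elt (R : realType) (A : normedModType R) (phi : A -> R) : Prop :=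
  (forall (c : R) u v, phi (c *: u + v) = c * phi u + phi v) /\ continuous phi.

(** (i) If α_x a, x ∈ U, span a finite-dimensional space, choose x_1, ..., x_n ∈ U
    with α_{x_i} a spanning it; for g near e all g x_i stay in U, so α_g preserves
    the span.  The g such that α_g and α_{g⁻¹} preserve the span form an open
    subgroup H, and a lies in the span, so F_H(a) is finite dimensional.
    (ii) Among compact sets K of positive Haar measure whose orbit lies in the span
    of a finite family t, take one with t shortest.  Every compact K' ⊆ K of
    positive measure then spans the same space.  By Steinhaus' lemma g⁻¹K ∩ K has
    positive measure for g near e, so α_g preserves the span of t and the argument
    of (i) applies, after conjugation by a point of K.
    (iii) By Hahn–Banach the coordinates on the span of a basis of F_H(a) extend
    to continuous functionals; along the orbit they vanish at infinity while
    ‖α_h a‖ = ‖a‖ ≠ 0 is bounded by them.  Hence H lies in a compact set, and as an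
    open, hence closed, subgroup it is compact. *)

From HB Require Import structures.
From mathcomp Require Import all_boot all_order all_algebra.
From mathcomp Require Import all_classical all_reals all_analysis.
From mathcomp Require Import lra.
Set Implicit Arguments. Unset Strict Implicit. Unset Printing Implicit Defensive.
Import Order.TTheory GRing.Theory Num.Theory.
Import numFieldNormedType.Exports.
Local Open Scope classical_set_scope.
Local Open Scope ring_scope.

Section FiniteSpan.
Variables (R : fieldType) (V : lmodType R).
Implicit Types (s t : seq V) (u v : V) (c : nat -> R).

Definition lincomb s c : V := \sum_(i < size s) c i *: nth 0 s i.
Definition in_span s v := exists c, v = lincomb s c.
Definition lin_indep s :=
  forall c, lincomb s c = 0 -> forall i, (i < size s)%N -> c i = 0.

Definition row_coef n (v : 'rV[R]_n) (i : nat) : R := oapp (fun j => v 0 j) 0 (insub i).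

Lemma lincomb_scaleD s k c d :
  k *: lincomb s c + lincomb s d = lincomb s (fun i => k * c i + d i).
Proof.
rewrite /lincomb scaler_sumr -big_split.
by apply: eq_bigr => i _; rewrite scalerA scalerDl.
Qed.

Lemma lincomb_cons v s c : lincomb (v :: s) c = c 0%N *: v + lincomb s (c \o succn).
Proof. by rewrite /lincomb big_ord_recl. Qed.

Lemma in_span0 s : in_span s 0.
Proof. by exists (fun _ => 0); rewrite /lincomb big1 // => i _; rewrite scale0r. Qed.

Lemma in_spanZD s k u v : in_span s u -> in_span s v -> in_span s (k *: u + v).
Proof. by move=> [c ->] [d ->]; exists (fun i => k * c i + d i); apply: lincomb_scaleD. Qed.

Lemma in_spanD s u v : in_span s u -> in_span s v -> in_span s (u + v).
Proof. by move=> su sv; rewrite -[u]scale1r; apply: in_spanZD. Qed.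

Lemma in_spanZ s k u : in_span s u -> in_span s (k *: u).
Proof. by move=> su; rewrite -[_ *: _]addr0; apply: in_spanZD (in_span0 s). Qed.

Lemma in_span_sum s n (F : 'I_n -> V) :
  (forall i, in_span s (F i)) -> in_span s (\sum_(i < n) F i).
Proof. by move=> sF; elim/big_ind: _ => //; [exact: in_span0 | exact: in_spanD]. Qed.

Lemma in_span_nth s i : (i < size s)%N -> in_span s (nth 0 s i).
Proof.
move=> lt_is; exists (fun j => (j == i)%:R); rewrite /lincomb.
rewrite (bigD1 (Ordinal lt_is)) //= eqxx scale1r big1 ?addr0 // => j neq_ji.
by rewrite -val_eqE /= in neq_ji; rewrite (negbTE neq_ji) scale0r.
Qed.

Lemma in_span_trans s t v :
  (forall i, (i < size t)%N -> in_span s (nth 0 t i)) -> in_span t v -> in_span s v.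
Proof. by move=> st [c ->]; apply: in_span_sum => i; apply/in_spanZ/st. Qed.

Lemma lin_indep_cons v s : lin_indep s -> ~ in_span s v -> lin_indep (v :: s).
Proof.
move=> indep_s s'v c; rewrite lincomb_cons => /eqP; rewrite addr_eq0 => /eqP cv.
have c0 : c 0%N = 0.
  apply: contra_notP s'v => /eqP c0_neq0.
  rewrite -[v]scale1r -(mulVf c0_neq0) -scalerA cv -scaleN1r.
  by apply/in_spanZ/in_spanZ; exists (c \o succn).
move: cv; rewrite c0 scale0r => /esym/eqP; rewrite oppr_eq0 => /eqP cs0.
by move=> [|i] //= /(indep_s _ cs0).
Qed.

Lemma lin_indep_size_le s t :
  (forall i, (i < size t)%N -> in_span s (nth 0 t i)) -> lin_indep t ->
  (size t <= size s)%N.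
Proof.
move=> st indep_t; rewrite leqNgt; apply/negP => lt_st.
have /choice[d td] : forall i, exists d, (i < size t)%N -> nth 0 t i = lincomb s d.
  move=> i; have [lt_it|] := boolP (i < size t)%N; last by exists (fun=> 0) => /negP.
  by have [d ->] := st i lt_it; exists d.
pose M : 'M[R]_(size t, size s) := \matrix_(i, j) d i j.
have : kermx M != 0.
  rewrite -mxrank_eq0 mxrank_ker subn_eq0 -ltnNge.
  exact: leq_ltn_trans (rank_leq_col M) lt_st.
move/rowV0Pn => [w /sub_kermxP wM0 /negP]; apply; apply/eqP/rowP => i.
have tw0 : lincomb t (row_coef w) = 0.
  transitivity (\sum_(j < size s) (w *m M) 0 j *: nth 0 s j); last first.
    by rewrite wM0 big1 // => j _; rewrite mxE scale0r.
  rewrite /lincomb; under eq_bigr => k _ do rewrite /row_coef valK /= td //.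
  under eq_bigr do rewrite /lincomb scaler_sumr.
  rewrite exchange_big /=; apply: eq_bigr => j _.
  by rewrite mxE scaler_suml; apply: eq_bigr => k _; rewrite scalerA mxE.
by have := indep_t _ tw0 i (ltn_ord i); rewrite /row_coef valK mxE.
Qed.

Lemma exists_basis_in s (S : set V) : S `<=` in_span s ->
  exists t, [/\ forall i, (i < size t)%N -> S (nth 0 t i), lin_indep t &
              S `<=` in_span t].
Proof.
move=> Ss.
pose P k := `[< exists t, [/\ size t = k, forall i, (i < size t)%N -> S (nth 0 t i)
                           & lin_indep t] >].
have P0 : exists k, P k by exists 0%N; apply/asboolP; exists [::].
have P_bounded k : P k -> (k <= size s)%N.
  by move=> /asboolP[t [<- tS /lin_indep_size_le]]; apply => i /tS /Ss.
case: (ex_maxnP P0 P_bounded) => k /asboolP[t [tk tS indep_t]] max_k.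
exists t; split => // v Sv; apply: contrapT => t'v.
have /max_k : P k.+1.
  apply/asboolP; exists (v :: t); split; [by rewrite /= tk | | exact: lin_indep_cons].
  by case=> [|i] // /tS.
by rewrite ltnn.
Qed.

End FiniteSpan.

Section FiniteSpanNorm.
Variables (R : realType) (V : normedModType R).
Implicit Types (t : seq V) (c : nat -> R).

Lemma fin_dim_spanE (S : set V) :
  fin_dim_span S = exists s, S `<=` in_span s.
Proof. by []. Qed.

Lemma norm_lincomb_le t c :
  `|lincomb t c| <= \sum_(i < size t) `|c i| * `|nth 0 t i|.
Proof. by apply: le_trans (ler_norm_sum _ _ _) _; apply: ler_sum => i _; rewrite normrZ. Qed.

Lemma lincomb_row_coef t (v : 'rV[R]_(size t)) :
  lincomb t (row_coef v) = \sum_(i < size t) v 0 i *: nth 0 t i.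
Proof. by apply: eq_bigr => i _; rewrite /row_coef valK. Qed.

Lemma normr_row_coord n (v : 'rV[R]_n) i : `|v 0 i| <= `|v|.
Proof. by rewrite [leRHS]mx_normrE; exact: (le_bigmax _ _ (0, i)). Qed.

Lemma continuous_row_lincomb t :
  continuous (fun v : 'rV[R]_(size t) => \sum_(i < size t) v 0 i *: nth 0 t i).
Proof.
move=> v; elim: (index_enum _) => [|i r IHr].
  by under eq_fun do rewrite big_nil; exact: cst_continuous.
under eq_fun do rewrite big_cons.
apply: (@continuousD _ _ _ (fun w : 'rV[R]_(size t) => w 0 i *: t`_i)) IHr.
exact/continuousZr_tmp/coord_continuous.
Qed.

Lemma lincomb_unit_sphere_min t : lin_indep t -> (0 < size t)%N ->
  exists2 d, 0 < d & forall v : 'rV[R]_(size t),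
    `|v| = 1 -> d <= `|\sum_(i < size t) v 0 i *: nth 0 t i|.
Proof.
move=> indep_t t_gt0; set n := size t.
pose F (v : 'rV[R]_n) := `|\sum_(i < n) v 0 i *: nth 0 t i|.
pose S := [set v : 'rV[R]_n | `|v| = 1].
have S_compact : compact S.
  apply: bounded_closed_compact.
    by exists 1; split => // M M_gt1 v /= ->; exact: ltW.
  have -> : S = Num.norm @^-1` [set x : R | x = 1] by [].
  apply: preimage_closed; last exact: closed_eq.
  by move=> w _; exact: norm_continuous.
have S_neq0 : S !=set0.
  pose w : 'rV[R]_n := const_mx 1.
  have w_neq0 : w != 0.
    by apply/eqP => /rowP/(_ (Ordinal t_gt0)) /eqP; rewrite !mxE oner_eq0.
  by exists (`|w|^-1 *: w); rewrite /S /= normrZ normfV normr_id mulVf // normr_eq0.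
have F_cont : continuous F :=
  fun w => continuous_comp (@continuous_row_lincomb t w) (@norm_continuous _ V _).
have [v Sv minv] := compact_EVT_min S_neq0 S_compact (continuous_subspaceT F_cont).
exists (F v) => [|w Sw]; last by apply: minv; rewrite inE.
rewrite lt_neqAle normr_ge0 andbT eq_sym normr_eq0 -lincomb_row_coef.
apply/eqP => /indep_t v0; move: Sv.
have -> : v = 0 by apply/rowP => j; rewrite mxE -(v0 j (ltn_ord j)) /row_coef valK.
by rewrite inE /S /= normr0 => /eqP; rewrite eq_sym oner_eq0.
Qed.

Lemma lincomb_coef_bound t : lin_indep t ->
  exists2 d, 0 < d & forall c i, (i < size t)%N -> d * `|c i| <= `|lincomb t c|.
Proof.
move=> indep_t; have [t0|t_gt0] := posnP (size t).
  by exists 1 => // c i; rewrite t0.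
have [d d_gt0 dt] := lincomb_unit_sphere_min indep_t t_gt0.
exists d => // c i lt_it; pose w : 'rV[R]_(size t) := \row_j c j.
have ci_le_w : `|c i| <= `|w| by have := normr_row_coord w (Ordinal lt_it); rewrite mxE.
have [w0|w_neq0] := eqVneq w 0.
  by move: ci_le_w; rewrite w0 normr0 normr_le0 => /eqP ->; rewrite normr0 mulr0.
have w_gt0 : 0 < `|w| by rewrite normr_gt0.
have := dt (`|w|^-1 *: w); rewrite normrZ normfV normr_id mulVf ?gt_eqF // => /(_ erefl).
under [X in _ <= `|X|]eq_bigr do rewrite mxE -scalerA.
rewrite -scaler_sumr normrZ normfV normr_id ler_pdivlMl // => wd.
rewrite (_ : lincomb t c = \sum_j w 0 j *: t`_j); last by apply: eq_bigr => j _; rewrite mxE.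
by rewrite mulrC; apply: le_trans wd; rewrite ler_wpM2r // ltW.
Qed.

End FiniteSpanNorm.

Lemma normZV_addr (R : realFieldType) (V : normedModType R) (m : R) (y x : V) :
  0 < m -> m * `|m^-1 *: y + x| = `|y + m *: x|.
Proof.
move=> m_gt0; rewrite -[X in X * _](gtr0_norm m_gt0) -normrZ scalerDr scalerA.
by rewrite divff ?gt_eqF // scale1r.
Qed.

Section HahnBanach.
Variables (R : realType) (V : normedModType R) (K : R).
Implicit Types (Γ : set (V * R)) (x y : V).

(* A partial linear functional dominated by [K * `|_|] is handled through its graph. *)
Definition graph_linear Γ :=
  forall x r y s k, Γ (x, r) -> Γ (y, s) -> Γ (k *: x + y, k * r + s).
Definition graph_functional Γ := forall x r s, Γ (x, r) -> Γ (x, s) -> r = s.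
Definition graph_dominated Γ := forall x r, Γ (x, r) -> r <= K * `|x|.
Definition dominated_graph Γ :=
  [/\ graph_linear Γ, graph_functional Γ & graph_dominated Γ].

Lemma graph_linear0 Γ x r : graph_linear Γ -> Γ (x, r) -> Γ (0, 0).
Proof.
by move=> linΓ Γx; have := linΓ _ _ _ _ (-1) Γx Γx; rewrite scaleN1r mulN1r !addNr.
Qed.

Lemma graph_linearZ Γ k x r : graph_linear Γ -> Γ (x, r) -> Γ (k *: x, k * r).
Proof.
by move=> linΓ Γx; have := linΓ _ _ _ _ k Γx (graph_linear0 linΓ Γx); rewrite !addr0.
Qed.

Definition graph_ext Γ x0 c :=
  [set p : V * R | exists y r k, [/\ Γ (y, r), p.1 = y + k *: x0 & p.2 = r + k * c]].

Lemma graph_ext_sub Γ x0 c : Γ `<=` graph_ext Γ x0 c.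
Proof. by move=> [y r] Γy; exists y, r, 0; rewrite scale0r mul0r !addr0. Qed.

Lemma graph_ext_new Γ x0 c : Γ (0, 0) -> graph_ext Γ x0 c (x0, c).
Proof. by move=> Γ0; exists 0, 0, 1; rewrite scale1r mul1r !add0r. Qed.

Lemma graph_ext_linear Γ x0 c : graph_linear Γ -> graph_linear (graph_ext Γ x0 c).
Proof.
move=> linΓ _ _ _ _ k [y [r [l [Γy /= -> ->]]]] [y' [r' [l' [Γy' /= -> ->]]]].
exists (k *: y + y'), (k * r + r'), (k * l + l'); split => /=; first exact: linΓ.
  by rewrite scalerDr scalerA addrACA scalerDl.
by rewrite mulrDr mulrA addrACA mulrDl.
Qed.

Lemma graph_ext_functional Γ x0 c : graph_linear Γ -> graph_functional Γ ->
  (forall r, ~ Γ (x0, r)) -> graph_functional (graph_ext Γ x0 c).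
Proof.
move=> linΓ funΓ x0_new x _ _ [y [r [k [Γy /= yx ->]]]] [y' [r' [k' [Γy' /= y'x ->]]]].
have [eq_kk'|neq_kk'] := eqVneq k k'.
  subst k'.
  have eq_y'y : y' = y by apply: (addIr (k *: x0)); rewrite -y'x -yx.
  by rewrite eq_y'y in Γy'; rewrite (funΓ _ _ _ Γy Γy').
have kk'_neq0 : k' - k != 0 by rewrite subr_eq0 eq_sym.
case: (x0_new ((k' - k)^-1 * (r - r'))).
have -> : x0 = (k' - k)^-1 *: (y - y').
  apply: (scalerI kk'_neq0); rewrite scalerA divff // scale1r scalerBl.
  have -> : y = x - k *: x0 by rewrite yx addrK.
  have -> : y' = x - k' *: x0 by rewrite y'x addrK.
  by rewrite opprB [RHS]addrC [RHS]addrA subrK.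
apply: graph_linearZ => //.
by have := linΓ _ _ _ _ (-1) Γy' Γy; rewrite scaleN1r mulN1r !(addrC (- _)).
Qed.

Hypothesis K_ge0 : 0 <= K.

Lemma graph_ext_dominated Γ x0 c : graph_linear Γ -> graph_dominated Γ ->
  (forall y r, Γ (y, r) -> r - K * `|y - x0| <= c) ->
  (forall y r, Γ (y, r) -> c <= K * `|y + x0| - r) ->
  graph_dominated (graph_ext Γ x0 c).
Proof.
move=> linΓ domΓ c_ge c_le _ _ [y [r [k [Γy /= -> ->]]]].
have [k_lt0|k_gt0|->] := ltgtP k 0; last by rewrite scale0r mul0r !addr0; exact: domΓ.
- have m_gt0 : 0 < - k by rewrite oppr_gt0.
  have := c_ge _ _ (graph_linearZ (- k)^-1 linΓ Γy).
  rewrite -(ler_pM2l m_gt0) mulrBr mulrA divff ?gt_eqF // mul1r mulrCA.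
  by rewrite normZV_addr // scalerN scaleNr opprK; lra.
- have := c_le _ _ (graph_linearZ k^-1 linΓ Γy).
  rewrite -(ler_pM2l k_gt0) mulrBr mulrCA normZV_addr // mulrA divff ?gt_eqF //.
  by rewrite mul1r; lra.
Qed.

Lemma exists_graph_ext_constant Γ x0 : graph_linear Γ -> graph_dominated Γ ->
  Γ (0, 0) -> exists c,
    (forall y r, Γ (y, r) -> r - K * `|y - x0| <= c) /\
    (forall y r, Γ (y, r) -> c <= K * `|y + x0| - r).
Proof.
move=> linΓ domΓ Γ0.
have sep y r z s : Γ (y, r) -> Γ (z, s) -> r - K * `|y - x0| <= K * `|z + x0| - s.
  move=> Γy Γz; have := domΓ _ _ (linΓ _ _ _ _ 1 Γy Γz); rewrite scale1r mul1r.
  have : `|y + z| <= `|y - x0| + `|z + x0|.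
    by apply: le_trans (ler_normD _ _); rewrite addrACA addNr addr0.
  by move=> /(ler_wpM2l K_ge0); rewrite mulrDr; lra.
pose L := [set p.2 - K * `|p.1 - x0| | p in Γ].
have L_ub : has_ubound L by exists (K * `|0 + x0| - 0) => _ [[y r] Γy <-]; exact: sep.
have L_neq0 : L !=set0 by exists (0 - K * `|0 - x0|), (0, 0).
exists (sup L); split => [y r Γy|z s Γz].
  by apply: ub_le_sup => //; exists (y, r).
by apply: ge_sup => // _ [[y r] Γy <-]; exact: sep.
Qed.

Lemma bigcup_dominated_graph (F : set (set (V * R))) :
  F `<=` dominated_graph -> total_on F subset -> dominated_graph (\bigcup_(Γ in F) Γ).
Proof.
move=> F_dom F_chain.
have common Γ1 Γ2 p q : F Γ1 -> F Γ2 -> Γ1 p -> Γ2 q ->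
    exists2 Γ, F Γ & Γ p /\ Γ q.
  move=> FΓ1 FΓ2 Γ1p Γ2q.
  by have [/(_ p Γ1p)|/(_ q Γ2q)] := F_chain _ _ FΓ1 FΓ2; [exists Γ2 | exists Γ1].
split.
- move=> x r y s k [Γ1 FΓ1 Γ1x] [Γ2 FΓ2 Γ2y].
  have [Γ FΓ [Γx Γy]] := common _ _ _ _ FΓ1 FΓ2 Γ1x Γ2y.
  by exists Γ => //; have [linΓ _ _] := F_dom _ FΓ; exact: linΓ.
- move=> x r s [Γ1 FΓ1 Γ1x] [Γ2 FΓ2 Γ2x].
  have [Γ FΓ [Γr Γs]] := common _ _ _ _ FΓ1 FΓ2 Γ1x Γ2x.
  by have [_ funΓ _] := F_dom _ FΓ; exact: funΓ Γr Γs.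
- by move=> x r [Γ FΓ Γx]; have [_ _ domΓ] := F_dom _ FΓ; exact: domΓ.
Qed.

Lemma hahn_banach (B : set (V * R)) : dominated_graph B -> B !=set0 ->
  exists phi : V -> R,
    [/\ forall k u v, phi (k *: u + v) = k * phi u + phi v,
        forall x r, B (x, r) -> phi x = r &
        forall x, `|phi x| <= K * `|x|].
Proof.
move=> domB [[x0 r0] Bx0].
(* The empty graph is admitted so that the empty chain has an upper bound in [P]. *)
pose P Γ := dominated_graph Γ /\ (Γ !=set0 -> B `<=` Γ).
have P_chain F : F `<=` P -> total_on F subset -> P (\bigcup_(Γ in F) Γ).
  move=> FP F_chain; split; first by apply: bigcup_dominated_graph => // Γ /FP[].
  by move=> [p [Γ FΓ Γp]] q Bq; exists Γ => //; apply: (FP _ FΓ).2 => //; exists p.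
have [Γ [[[linΓ funΓ domΓ] ΓB] maxΓ]] := Zorn_bigcup P_chain.
have BΓ : B `<=` Γ.
  apply: ΓB; apply: contrapT => /set0P/negP/negbNE/eqP Γ_empty; apply: (maxΓ B).
    by rewrite Γ_empty; split => // /(_ _ Bx0).
  by split => // _ q Bq.
have Γ0 : Γ (0, 0) := graph_linear0 linΓ (BΓ _ Bx0).
have Γ_total x : exists r, Γ (x, r).
  apply: contrapT => x_new.
  have [c [c_ge c_le]] := exists_graph_ext_constant x linΓ domΓ Γ0.
  apply: (maxΓ (graph_ext Γ x c)).
    split; first exact: graph_ext_sub.
    by move/(_ _ (graph_ext_new x c Γ0)) => Γxc; apply: x_new; exists c.
  split; last by move=> _ q /BΓ /graph_ext_sub.
  split; [exact: graph_ext_linear | | exact: graph_ext_dominated].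
  by apply: graph_ext_functional => // r Γxr; apply: x_new; exists r.
have /choice[phi phiΓ] := Γ_total.
exists phi; split => [k u v | x r /BΓ /(funΓ _ _ _ (phiΓ x)) // | x].
  exact: funΓ (phiΓ _) (linΓ _ _ _ _ _ (phiΓ u) (phiΓ v)).
rewrite ler_norml domΓ ?andbT //.
have := domΓ _ _ (graph_linearZ (-1) linΓ (phiΓ x)).
by rewrite scaleN1r normrN mulN1r lerNl.
Qed.

End HahnBanach.

Lemma dominated_linear_continuous (R : realType) (V : normedModType R) (phi : V -> R)
    (K : R) :
  (forall k u v, phi (k *: u + v) = k * phi u + phi v) ->
  (forall x, `|phi x| <= K * `|x|) -> continuous phi.
Proof.
move=> phi_lin phi_le x; apply/cvgrPdist_lt => eps eps_gt0.
have phiB y : phi x - phi y = phi (x - y).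
  by rewrite -[- y]scaleN1r [x + _]addrC phi_lin mulN1r addrC.
have K1_gt0 : 0 < `|K| + 1 by rewrite ltr_wpDl.
near=> y; rewrite phiB; apply: le_lt_trans (phi_le _) _.
apply: le_lt_trans (_ : _ <= (`|K| + 1) * `|x - y|) _.
  by rewrite ler_wpM2r // ler_wpDr // ler_norm.
rewrite -ltr_pdivlMl //; near: y.
by apply: cvgr_dist_lt; rewrite ?mulr_gt0 ?invr_gt0.
Unshelve. all: by end_near.
Qed.

Lemma exists_coord_functional (R : realType) (V : normedModType R) (t : seq V) j :
  lin_indep t -> (j < size t)%N ->
  exists phi : V -> R, dual_elt phi /\ forall c, phi (lincomb t c) = c j.
Proof.
move=> indep_t lt_jt; have [d d_gt0 dt] := lincomb_coef_bound indep_t.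
pose B := [set (lincomb t c, c j) | c in [set: nat -> R]].
have domB : dominated_graph d^-1 B.
  split.
  - move=> _ _ _ _ k [c _ [<- <-]] [c' _ [<- <-]].
    by exists (fun i => k * c i + c' i) => //; rewrite lincomb_scaleD.
  - move=> x _ _ [c _ [<- <-]] [c' _ [tcc' <-]].
    have : lincomb t (fun i => - 1 * c i + c' i) = 0.
      by rewrite -lincomb_scaleD tcc' scaleN1r addNr.
    by move=> /indep_t/(_ j lt_jt)/eqP; rewrite mulN1r addrC subr_eq0 => /eqP.
  - move=> _ _ [c _ [<- <-]]; rewrite ler_pdivlMl //.
    by apply: le_trans (dt c j lt_jt); apply: ler_wpM2l; [exact: ltW | exact: ler_norm].
have dV_ge0 : 0 <= d^-1 by rewrite invr_ge0 ltW.
have B_neq0 : B !=set0 by exists (lincomb t (fun=> 0), 0); exists (fun=> 0).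
have [phi [phi_lin phiB phi_le]] := hahn_banach dV_ge0 domB B_neq0.
exists phi; split; last by move=> c; apply: phiB; exists c.
by split => //; exact: dominated_linear_continuous phi_lin phi_le.
Qed.

Section TopologicalGroup.
Variables (G : ptopologicalType) (mul : G -> G -> G) (inv : G -> G) (e : G).
Hypothesis HG : lc_group mul inv e.

Lemma mulgA x y z : mul x (mul y z) = mul (mul x y) z. Proof. by case: HG. Qed.
Lemma mul1g x : mul e x = x. Proof. by case: HG => _ /(_ x)[]. Qed.
Lemma mulg1 x : mul x e = x. Proof. by case: HG => _ /(_ x)[]. Qed.
Lemma mulVg x : mul (inv x) x = e. Proof. by case: HG => _ _ /(_ x)[]. Qed.
Lemma mulgV x : mul x (inv x) = e. Proof. by case: HG => _ _ /(_ x)[]. Qed.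

Lemma mulKg x y : mul (inv x) (mul x y) = y.
Proof. by rewrite mulgA mulVg mul1g. Qed.

Lemma mulKVg x y : mul x (mul (inv x) y) = y.
Proof. by rewrite mulgA mulgV mul1g. Qed.

Lemma invg1 : inv e = e. Proof. by rewrite -[LHS]mulg1 mulVg. Qed.

Lemma invg_unique x y : mul x y = e -> inv x = y.
Proof. by move=> xy; rewrite -[LHS]mulg1 -xy mulKg. Qed.

Lemma invgK x : inv (inv x) = x.
Proof. exact/invg_unique/mulVg. Qed.

Lemma invMg x y : inv (mul x y) = mul (inv y) (inv x).
Proof. by apply: invg_unique; rewrite -mulgA (mulgA y) mulgV mul1g mulgV. Qed.

Lemma continuous_mul : continuous (fun p : G * G => mul p.1 p.2).
Proof. by case: HG => _ _ _ []. Qed.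

Lemma continuous_inv : continuous inv.
Proof. by case: HG => _ _ _ []. Qed.

Lemma hausdorffG : hausdorff_space G.
Proof. by case: HG => _ _ _ _ []. Qed.

Lemma locally_compactG : locally_compact [set: G].
Proof. by case: HG => _ _ _ _ []. Qed.

Lemma continuous_mull c : continuous (mul c).
Proof.
move=> x; apply: (@continuous_comp _ _ _ (fun y => (c, y)) (fun p : G * G => mul p.1 p.2));
  [exact: (cvg_pair (cvg_cst c) cvg_id) | exact: continuous_mul].
Qed.

Lemma continuous_mulr c : continuous (mul^~ c).
Proof.
move=> x; apply: (@continuous_comp _ _ _ (fun y => (y, c)) (fun p : G * G => mul p.1 p.2));
  [exact: (cvg_pair cvg_id (cvg_cst c)) | exact: continuous_mul].
Qed.

Lemma nbhs1_inv (N : set G) : nbhs e N -> nbhs e (inv @^-1` N).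
Proof. by move=> Ne; apply: continuous_inv; rewrite invg1. Qed.

Lemma subgroup_conj (H : set G) x : subgroup mul inv e H ->
  subgroup mul inv e [set g | H (mul x (mul g (inv x)))].
Proof.
move=> [He HM HV]; split => /=; first by rewrite mul1g mulgV.
  move=> g h Hg Hh; have := HM _ _ Hg Hh.
  by rewrite -!mulgA mulKg.
by move=> g /HV; rewrite !invMg invgK -mulgA.
Qed.

Lemma open_conj (H : set G) x : open H -> open [set g | H (mul x (mul g (inv x)))].
Proof.
move=> oH; apply: (open_comp (f := mul x \o mul^~ (inv x))) oH => g _.
by apply: continuous_comp; [exact: continuous_mulr | exact: continuous_mull].
Qed.

Lemma open_subgroup_closed (H : set G) : subgroup mul inv e H -> open H -> closed H.
Proof.
move=> [He HM HV] oH; rewrite -openC openE => x nHx.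
have : nbhs x [set y | H (mul (inv x) y)].
  by apply: continuous_mull; rewrite mulVg; move: oH; rewrite openE; apply; exact: He.
apply: filterS => y Hy Hy'; apply: nHx.
by have := HM _ _ Hy' (HV _ Hy); rewrite invMg invgK mulKVg.
Qed.

Lemma tube (K W : set G) : compact K -> open W -> K `<=` W ->
  \forall g \near e, forall k, K k -> W (mul g k).
Proof.
move=> cK oW KW.
apply: ((compact_near_coveringP K).1 cK _ _ (fun g k => W (mul g k))) => k Kk.
have : nbhs (mul e k) W by rewrite mul1g; move: oW; rewrite openE; apply; exact: KW.
move=> /(@continuous_mul (e, k))[[U V] /= [Ue Vk] UVW].
by exists (V, U) => // -[k' g] /= [Vk' Ug]; exact: (UVW (g, k')).
Qed.

End TopologicalGroup.

Section IsometricAction.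
Variables (R : realType) (G : ptopologicalType) (mul : G -> G -> G) (inv : G -> G)
  (e : G) (A : normedModType R) (alpha : G -> A -> A).
Hypotheses (HG : lc_group mul inv e) (HA : isometric_action mul e alpha).

Lemma act_linear x c u v : alpha x (c *: u + v) = c *: alpha x u + alpha x v.
Proof. by case: HA. Qed.
Lemma act_norm x v : `|alpha x v| = `|v|. Proof. by case: HA. Qed.
Lemma act1 v : alpha e v = v. Proof. by case: HA. Qed.
Lemma actM x y v : alpha (mul x y) v = alpha x (alpha y v). Proof. by case: HA. Qed.

Lemma act0 x : alpha x 0 = 0.
Proof. by apply/eqP; rewrite -normr_eq0 act_norm normr0. Qed.

Lemma act_lincomb x t c : alpha x (lincomb t c) = lincomb (map (alpha x) t) c.
Proof.
rewrite /lincomb size_map; elim: (index_enum _) => [|i r IHr]; first by rewrite !big_nil act0.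
by rewrite !big_cons -IHr act_linear (nth_map 0).
Qed.

Lemma in_span_act x t w v :
  (forall i, (i < size t)%N -> in_span w (alpha x (nth 0 t i))) ->
  in_span t v -> in_span w (alpha x v).
Proof.
move=> xtw [c ->]; rewrite act_lincomb.
apply: (@in_span_trans _ _ _ (map (alpha x) t)); last by exists c.
by move=> i; rewrite size_map => lt_it; rewrite (nth_map 0) //; exact: xtw.
Qed.

Definition stabilizes_span (w : seq A) g := forall v, in_span w v -> in_span w (alpha g v).

Definition span_stabilizer (w : seq A) :=
  [set g | stabilizes_span w g /\ stabilizes_span w (inv g)].

Lemma subgroup_span_stabilizer w : subgroup mul inv e (span_stabilizer w).
Proof.
have stabM g h : stabilizes_span w g -> stabilizes_span w h ->
    stabilizes_span w (mul g h).
  by move=> wg wh v wv; rewrite actM; apply/wg/wh.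
split => [|g h [wg wg'] [wh wh']|g [wg wg']]; rewrite /span_stabilizer /=.
- by rewrite (invg1 HG); split => v; rewrite act1.
- by rewrite (invMg HG); split; exact: stabM.
- by rewrite (invgK HG).
Qed.

Lemma open_span_stabilizer w (N : set G) : nbhs e N ->
  (forall g, N g -> stabilizes_span w g) -> open (span_stabilizer w).
Proof.
move=> Ne Nw; rewrite openE => x [wx wx'].
have : nbhs x (mul (inv x) @^-1` (N `&` inv @^-1` N)).
  apply: (continuous_mull HG); rewrite /= (mulVg HG).
  by apply: filterI => //; exact: (nbhs1_inv HG).
apply: filterS => y [/Nw wxy /Nw wxy']; rewrite -(mulKVg HG x y); split.
  by move=> v wv; rewrite actM; apply/wx/wxy.
by rewrite (invMg HG) => v wv; rewrite actM; apply/wxy'/wx'.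
Qed.

Lemma open_subgroup_of_stable_span a w (N : set G) x : nbhs e N ->
  (forall g, N g -> stabilizes_span w g) -> in_span w (alpha x a) ->
  exists H, [/\ subgroup mul inv e H, open H & fin_dim_span (orbit_set alpha a H)].
Proof.
move=> Ne Nw wxa.
exists [set g | span_stabilizer w (mul x (mul g (inv x)))]; split.
- exact/(subgroup_conj HG)/subgroup_span_stabilizer.
- exact/(open_conj HG)/(open_span_stabilizer Ne).
rewrite fin_dim_spanE; exists (map (alpha (inv x)) w) => _ [g [wg _] <-].
have [c wc] := wg _ wxa; exists c.
by rewrite -act_lincomb -wc -!actM -!(mulgA HG) (mulVg HG) (mulg1 HG) (mulKg HG).
Qed.

Lemma open_subgroup_of_nbhs a (U : set G) : nbhs e U ->
  fin_dim_span (orbit_set alpha a U) ->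
  exists H, [/\ subgroup mul inv e H, open H & fin_dim_span (orbit_set alpha a H)].
Proof.
rewrite nbhsE fin_dim_spanE => -[U0 [oU0 U0e] U0U] [s Us].
have U0s v : orbit_set alpha a U0 v -> in_span s v.
  by move=> [x /U0U Ux <-]; apply: Us; exists x.
have [t [tU0 _ U0t]] := exists_basis_in U0s.
pose N := [set g | forall i : 'I_(size t), orbit_set alpha a U0 (alpha g (nth 0 t i))].
have Ne : nbhs e N.
  apply: filter_forall => i; have [y U0y <-] := tU0 i (ltn_ord i).
  have : nbhs e [set g | U0 (mul g y)].
    apply: (continuous_mulr HG); rewrite /= (mul1g HG).
    by move: oU0; rewrite openE; apply.
  by apply: filterS => g U0gy; exists (mul g y) => //; rewrite actM.
apply: (open_subgroup_of_stable_span (N := N) (x := e) Ne).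
  by move=> g Ng v; apply: in_span_act => i lt_it; apply: U0t (Ng (Ordinal lt_it)).
by apply: U0t; exists e.
Qed.

End IsometricAction.

Section HaarMeasure.
Variables (R : realType) (G : ptopologicalType) (mul : G -> G -> G) (inv : G -> G)
  (e : G) (mu : {measure set (borelType G) -> \bar R}).
Hypotheses (HG : lc_group mul inv e) (Hmu : haar_measure mul mu).

Lemma open_borel_measurable (W : set G) : open W -> measurable (W : set (borelType G)).
Proof. exact: sub_sigma_algebra. Qed.

Lemma compact_borel_measurable (K : set G) :
  compact K -> measurable (K : set (borelType G)).
Proof.
move=> /(compact_closed (hausdorffG HG)) /closed_openC /open_borel_measurable.
by move=> /measurableC; rewrite setCK.
Qed.

Lemma haar_translate (E : set (borelType G)) x :
  measurable E -> mu [set mul x y | y in E] = mu E.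
Proof. by move=> mE; case: Hmu => muM _ _ _; exact: muM. Qed.

Lemma haar_compact_fin (K : set G) : compact K -> (mu K < +oo)%E.
Proof. by case: Hmu => _ muK _ _; exact: muK. Qed.

Lemma haar_inner_regular (E : set (borelType G)) : measurable E ->
  mu E = ereal_sup [set mu K | K in [set K : set G | compact K /\ K `<=` E]].
Proof. by case: Hmu => _ _ _ muE; exact: muE. Qed.

Lemma compact_in_open_fin (K : set G) : compact K ->
  exists W : set G, [/\ open W, K `<=` W & (mu W < +oo)%E].
Proof.
move=> cK; have /(_ e I)[V Ve [cV _]] := locally_compactG HG; rewrite withinET in Ve.
pose W := \bigcup_(k in K) [set y | (interior V) (mul y (inv k))].
have oW : open W.
  apply: bigcup_open => k _; apply: open_comp; last exact: open_interior.
  by move=> y _; exact: (continuous_mulr HG).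
exists W; split => // [k Kk|].
  by exists k => //=; rewrite (mulgV HG); exact: nbhs_singleton (nbhs_interior Ve).
pose VK := (fun p : G * G => mul p.1 p.2) @` (V `*` K).
have cVK : compact VK.
  apply: continuous_compact; last exact: compact_setX.
  exact/continuous_subspaceT/(continuous_mul HG).
apply: le_lt_trans (haar_compact_fin cVK); apply: le_measure; rewrite ?inE.
- exact: open_borel_measurable.
- exact: compact_borel_measurable.
move=> y [k Kk /interior_subset Vyk]; exists (mul y (inv k), k) => //=.
by rewrite -(mulgA HG) (mulVg HG) (mulg1 HG).
Qed.

Lemma compact_inner_approx (E : set (borelType G)) (eps : R) : measurable E ->
  (mu E < +oo)%E -> 0 < eps ->
  exists2 L : set G, compact L /\ L `<=` E & (mu (E `\` L) < eps%:E)%E.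
Proof.
move=> mE muE_fin eps_gt0.
have muE_fin' : mu E \is a fin_num by rewrite ge0_fin_numE.
have : (mu E - eps%:E < mu E)%E by rewrite lteBlDr // lteDl.
rewrite {2}(haar_inner_regular mE) => /ereal_sup_gt[_ [L [cL LE] <-] muL_gt].
exists L => //; have mL := compact_borel_measurable cL.
have muL_fin : mu L \is a fin_num.
  by rewrite ge0_fin_numE // (le_lt_trans _ muE_fin) // le_measure ?inE.
by rewrite measureD // setIidr // lteBlDr // addeC -lteBlDr.
Qed.

Lemma compact_outer_approx (K : set G) : compact K -> (0 < mu K)%E ->
  exists W, [/\ open W, K `<=` W & (mu W < mu K + mu K)%E].
Proof.
move=> cK muK_gt0; have mK := compact_borel_measurable cK.
have muK_fin : mu K \is a fin_num by rewrite ge0_fin_numE ?haar_compact_fin.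
have [W [oW KW muW_fin]] := compact_in_open_fin cK.
have oWK : open (W `\` K).
  exact/openI/closed_openC/(compact_closed (hausdorffG HG)).
have mWK := open_borel_measurable oWK.
have muWK_fin : (mu (W `\` K) < +oo)%E.
  apply: le_lt_trans muW_fin; apply: le_measure.
  - exact: mem_set.
  - by rewrite inE; exact: open_borel_measurable.
  - by move=> y [].
have [|L [cL LWK]] := compact_inner_approx (eps := fine (mu K)) mWK muWK_fin.
  by rewrite -lte_fin fineK.
rewrite fineK // => muWKL; have mL := compact_borel_measurable cL.
exists (W `\` L); split.
- exact/openI/closed_openC/(compact_closed (hausdorffG HG)).
- by move=> k Kk; split; [exact: KW | move=> /LWK[]].
apply: le_lt_trans (_ : _ <= mu K + mu ((W `\` K) `\` L))%E _; last by rewrite lteD2lE.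
apply: le_trans (measureU2 _ mK (measurableD mWK mL)); apply: le_measure.
- by rewrite inE; apply: measurableD => //; exact: open_borel_measurable.
- by rewrite inE; apply: measurableU => //; exact: measurableD.
- by move=> y [Wy nLy]; have [Ky|nKy] := pselect (K y); [left | right].
Qed.

Lemma steinhaus (K : set G) : compact K -> (0 < mu K)%E ->
  \forall g \near e, (0 < mu ([set mul g y | y in K] `&` K))%E.
Proof.
move=> cK muK_gt0; have [W [oW KW muW_lt]] := compact_outer_approx cK muK_gt0.
apply: filterS (tube HG cK oW KW) => g gKW.
have cgK : compact [set mul g y | y in K].
  exact/continuous_compact/cK/continuous_subspaceT/(continuous_mull HG).
have [mK mgK] := (compact_borel_measurable cK, compact_borel_measurable cgK).
rewrite measure_gt0; apply: contraTneq muW_lt => muI0; rewrite -leNgt.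
have -> : (mu K + mu K = mu ([set mul g y | y in K] `|` K))%E.
  by rewrite measureUfinr ?haar_compact_fin // muI0 sube0 haar_translate.
apply: le_measure.
- by rewrite inE; exact: measurableU.
- by rewrite inE; exact: open_borel_measurable.
- by move=> y [[k Kk <-]|Ky]; [exact: gKW | exact: KW].
Qed.

End HaarMeasure.

Section HaarOrbit.
Variables (R : realType) (G : ptopologicalType) (mul : G -> G -> G) (inv : G -> G)
  (e : G) (A : normedModType R) (alpha : G -> A -> A) (a : A)
  (mu : {measure set (borelType G) -> \bar R}).
Hypotheses (HG : lc_group mul inv e) (HA : isometric_action mul e alpha)
  (Hmu : haar_measure mul mu).

Definition orbit_span_size (k : nat) := exists (K : set G) (t : seq A),
  [/\ compact K, (0 < mu K)%E, size t = k & orbit_set alpha a K `<=` in_span t].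

Lemma exists_min_orbit_span (C : set (borelType G)) : measurable C ->
  (0 < mu C)%E -> fin_dim_span (orbit_set alpha a C) ->
  exists K t, [/\ compact K, (0 < mu K)%E, orbit_set alpha a K `<=` in_span t &
    forall k, orbit_span_size k -> (size t <= k)%N].
Proof.
move=> mC muC_gt0 [s Cs].
have [K [cK KC] muK_gt0] : exists2 K, compact K /\ K `<=` C & (0 < mu K)%E.
  move: muC_gt0; rewrite (haar_inner_regular Hmu mC) => /ereal_sup_gt[_ [K KC <-]].
  by exists K.
have sizeP : exists k, `[< orbit_span_size k >].
  exists (size s); apply/asboolP; exists K, s; split => // _ [y Ky <-].
  by apply: Cs; exists y => //; exact: KC.
have [k /asboolP[K' [t [cK' muK'_gt0 tk K't]]] min_k] := ex_minnP sizeP.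
by exists K', t; split => // k' sizek'; rewrite tk; apply/min_k/asboolP.
Qed.

Lemma min_orbit_span_sub (K K' : set G) t :
  orbit_set alpha a K `<=` in_span t -> (forall k, orbit_span_size k -> (size t <= k)%N) ->
  compact K' -> K' `<=` K -> (0 < mu K')%E ->
  exists t', (forall j, (j < size t')%N -> orbit_set alpha a K' (nth 0 t' j)) /\
             in_span t `<=` in_span t'.
Proof.
move=> Kt min_t cK' K'K muK'_gt0.
have K't : orbit_set alpha a K' `<=` in_span t.
  by move=> _ [y /K'K Ky <-]; apply: Kt; exists y.
have [t' [t'K' indep_t' K't']] := exists_basis_in K't.
exists t'; split => // v; apply: in_span_trans => i lt_it.
apply: contrapT => t'ti.
have : ((size t').+1 <= size t)%N.
  apply: (lin_indep_size_le _ (lin_indep_cons indep_t' t'ti)) => -[_|j] /=.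
    exact: in_span_nth.
  by move=> /t'K' /K't.
by rewrite ltnNge min_t //; exists K', t'.
Qed.

Lemma open_subgroup_of_positive_measure (C : set (borelType G)) :
  measurable C -> (0 < mu C)%E -> fin_dim_span (orbit_set alpha a C) ->
  exists H, [/\ subgroup mul inv e H, open H & fin_dim_span (orbit_set alpha a H)].
Proof.
move=> mC muC_gt0 finC.
have [K [t [cK muK_gt0 Kt min_t]]] := exists_min_orbit_span mC muC_gt0 finC.
have [x Kx] : K !=set0.
  by apply/set0P; apply: contraTneq muK_gt0 => ->; rewrite measure0 ltxx.
pose N := inv @^-1` [set g | (0 < mu ([set mul g y | y in K] `&` K))%E].
have Ne : nbhs e N := nbhs1_inv HG (steinhaus HG Hmu cK muK_gt0).
apply: (open_subgroup_of_stable_span HG HA (N := N) (x := x) Ne); last by apply: Kt; exists x.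
(* By minimality of [t], the orbit of K' := g⁻¹K ∩ K already spans the span of [t],
   and α_g maps the orbit of K' into that of K. *)
move=> g Ng v; apply: (in_span_act HA) => i lt_it.
pose K' := [set mul (inv g) y | y in K] `&` K.
have cK' : compact K'.
  apply: compact_closedI; last exact: compact_closed (hausdorffG HG) cK.
  exact/continuous_compact/cK/continuous_subspaceT/(continuous_mull HG).
have [t' [t'K' tt']] := min_orbit_span_sub Kt min_t cK' (@subIsetr _ _ _) Ng.
have [c ->] := tt' _ (in_span_nth lt_it).
apply: (in_span_act HA _ (ex_intro _ c erefl)) => j /t'K'[_ [[y Ky <-] _] <-].
by rewrite -(actM HA) (mulKVg HG); apply: Kt; exists y.
Qed.

End HaarOrbit.

Lemma norm_in_span_le (R : realType) (V : normedModType R) (t : seq V)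
    (phi : 'I_(size t) -> V -> R) v :
  (forall i c, phi i (lincomb t c) = c i) -> in_span t v ->
  `|v| <= \sum_(i < size t) `|phi i v| * `|nth 0 t i|.
Proof.
by move=> phiP [c ->]; under eq_bigr do rewrite phiP; exact: norm_lincomb_le.
Qed.

Lemma vanishes_at_infty_finite (R : realType) (G : ptopologicalType) (I : finType)
    (f : I -> G -> R) eps :
  0 < eps -> (forall i, vanishes_at_infty (f i)) ->
  exists K : set G, compact K /\ forall x, ~ K x -> forall i, `|f i x| < eps.
Proof.
move=> eps_gt0 f_van.
have /choice[K /all_and2[cK Kf]] : forall i, exists K : set G,
  compact K /\ forall x, ~ K x -> `|f i x| < eps := fun i => f_van i eps eps_gt0.
exists (\big[setU/set0]_i K i); split; first exact: bigsetU_compact.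
by move=> x nKx i; apply: Kf => Kix; apply: nKx; rewrite (bigD1 i) //=; left.
Qed.

Section CompactOrbit.
Variables (R : realType) (G : ptopologicalType) (mul : G -> G -> G) (inv : G -> G)
  (e : G) (A : normedModType R) (alpha : G -> A -> A) (a : A).
Hypotheses (HG : lc_group mul inv e) (HA : isometric_action mul e alpha).

Lemma compact_subgroup_of_vanishing (H : set G) : a != 0 ->
  subgroup mul inv e H -> open H -> fin_dim_span (orbit_set alpha a H) ->
  (forall phi, dual_elt phi -> vanishes_at_infty (fun x => phi (alpha x a))) ->
  compact H.
Proof.
rewrite fin_dim_spanE => a_neq0 sH oH [s Hs] vanish.
have [t [_ indep_t Ht]] := exists_basis_in Hs.
have /choice[phi phiP] : forall i : 'I_(size t), exists phi : A -> R,
    dual_elt phi /\ forall c, phi (lincomb t c) = c i.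
  by move=> i; exact: exists_coord_functional indep_t (ltn_ord i).
pose S := \sum_(i < size t) `|nth 0 t i|.
have S_ge0 : 0 <= S by rewrite sumr_ge0.
pose eps := `|a| / (S + 1).
have eps_gt0 : 0 < eps by rewrite divr_gt0 ?normr_gt0 // ltr_wpDl.
have [K [cK Kphi]] := vanishes_at_infty_finite (f := fun i x => phi i (alpha x a))
  eps_gt0 (fun i => vanish _ (phiP i).1).
apply: subclosed_compact (open_subgroup_closed HG sH oH) cK _ => h Hh.
apply: contrapT => nKh.
have : `|a| <= eps * S.
  rewrite -(act_norm HA h a).
  apply: le_trans (norm_in_span_le (fun i => (phiP i).2) (Ht _ (imageP _ Hh))) _.
  rewrite /S mulr_sumr; apply: ler_sum => i _; apply: ler_wpM2r => //.
  exact/ltW/Kphi.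
have a_gt0 : 0 < `|a| by rewrite normr_gt0.
by rewrite /eps mulrAC ler_pdivlMr ?ltr_wpDl // mulrDr mulr1; lra.
Qed.

End CompactOrbit.

Theorem lemma1p2 (R : realType) (G : ptopologicalType) (mul : G -> G -> G)
  (inv : G -> G) (e : G) (A : completeNormedModType R) (alpha : G -> A -> A)
  (a : A) :
  lc_group mul inv e ->
  isometric_action mul e alpha ->
  a != 0 ->
  [/\
   (* (i) *)
   (forall U : set G, nbhs e U -> fin_dim_span (orbit_set alpha a U) ->
      exists H : set G, [/\ subgroup mul inv e H, open H &
                            fin_dim_span (orbit_set alpha a H)]),
   (* (ii) *)
   (forall (mu : {measure set (borelType G) -> \bar R}) (C : set (borelType G)),
      haar_measure mul mu -> measurable C -> (0 < mu C)%E ->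
      fin_dim_span (orbit_set alpha a C) ->
      exists H : set G, [/\ subgroup mul inv e H, open H &
                            fin_dim_span (orbit_set alpha a H)]) &
   (* (iii) *)
   ((forall (b : A) (phi : A -> R), dual_elt phi ->
       vanishes_at_infty (fun x => phi (alpha x b))) ->
    (forall U : set G, nbhs e U -> fin_dim_span (orbit_set alpha a U) ->
      exists H : set G, [/\ subgroup mul inv e H, open H, compact H &
                            fin_dim_span (orbit_set alpha a H)]) /\
    (forall (mu : {measure set (borelType G) -> \bar R}) (C : set (borelType G)),
      haar_measure mul mu -> measurable C -> (0 < mu C)%E ->
      fin_dim_span (orbit_set alpha a C) ->
      exists H : set G, [/\ subgroup mul inv e H, open H, compact H &
                            fin_dim_span (orbit_set alpha a H)]))].
Proof.
move=> HG HA a_neq0.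
split => [U|mu C Hmu|vanish]; first exact: open_subgroup_of_nbhs.
  exact: open_subgroup_of_positive_measure.
have compactify H :
    [/\ subgroup mul inv e H, open H & fin_dim_span (orbit_set alpha a H)] ->
    [/\ subgroup mul inv e H, open H, compact H & fin_dim_span (orbit_set alpha a H)].
  case=> sH oH finH; split => //.
  by apply: (compact_subgroup_of_vanishing HG HA a_neq0 sH oH finH) => phi; exact: vanish.
split => [U Ue finU | mu C Hmu mC muC_gt0 finC].
  by have [H /compactify] := open_subgroup_of_nbhs HG HA Ue finU; exists H.
have [H /compactify] := open_subgroup_of_positive_measure HG HA Hmu mC muC_gt0 finC.
by exists H.
Qed.
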